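(* Let $C$ be an $[n,k]$ code over $\mathbb{F}_q$ with $d(C^\perp)=3$. Then $\gamma(C)=k$ $(=k-d(C^\perp)+3)$ if and only if $C$ is monomially equivalent to a dual Hamming code.
   Context: An $[n,k]$ code over $\mathbb{F}_q$ is a $k$-dimensional subspace $C\subseteq\mathbb{F}_q^n$; write $E=\{1,\dots,n\}$. For $\bm{x}\in\mathbb{F}_q^n$, $\mathrm{supp}(\bm{x})=\{i: x_i\neq 0\}$ and the weight is $|\mathrm{supp}(\bm{x})|$; for $B\subseteq\mathbb{F}_q^n$, $\mathrm{Supp}(B)=\bigcup_{\bm{x}\in B}\mathrm{supp}(\bm{x})$. $C^\perp$ is the dual code with respect to the standard inner product and $d(C^\perp)$ is the minimum weight of a nonzero codeword of $C^\perp$. The covering dimension is $\gamma(C)=\infty$ if $\mathrm{Supp}(C)\neq E$, and otherwise $\gamma(C)$ is the least positive integer $r$ such that $C$ has an $r$-dimensional subspace $D$ with $\mathrm{Supp}(D)=E$. A dual Hamming code is an $[(q^k-1)/(q-1),k]$ code over $\mathbb{F}_q$ with a generator matrix whose columns consist of exactly one nonzero vector from each one-dimensional subspace of $\mathbb{F}_q^k$. Two codes are monomially equivalent if one is obtained from the other by permuting coordinates and multiplying coordinates by nonzero scalars. *)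

From HB Require Import structures.
From mathcomp Require Import all_boot all_order all_algebra all_fingroup all_field.
Set Implicit Arguments. Unset Strict Implicit. Unset Printing Implicit Defensive.
Import GRing.Theory.
Local Open Scope ring_scope.

Section Codes.
Variables (F : finFieldType) (n : nat).

Definition supp (x : 'rV[F]_n) : {set 'I_n} := [set i | x 0 i != 0].

Definition wt (x : 'rV[F]_n) : nat := #|supp x|.

Definition Supp (B : {vspace 'rV[F]_n}) : {set 'I_n} :=
  [set i | [exists x : 'rV[F]_n, (x \in B) && (x 0 i != 0)]].

Definition in_dual (C : {vspace 'rV[F]_n}) (x : 'rV[F]_n) : Prop :=
  forall y : 'rV[F]_n, y \in C -> x *m y^T = 0.

Definition dual_min_dist (C : {vspace 'rV[F]_n}) (d : nat) : Prop :=
  (exists x, [/\ in_dual C x, x != 0 & wt x = d]) /\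
  (forall x, in_dual C x -> x != 0 -> (d <= wt x)%N).

(* gamma(C) = r  (r a natural number, i.e. gamma(C) finite):
   Supp C = E and r is the least positive integer such that C has an
   r-dimensional subspace D with Supp D = E. *)
Definition covering_dim (C : {vspace 'rV[F]_n}) (r : nat) : Prop :=
  [/\ Supp C = [set: 'I_n],
      (0 < r)%N,
      (exists D : {vspace 'rV[F]_n},
          [/\ (D <= C)%VS, \dim D = r & Supp D = [set: 'I_n]]) &
      (forall r' : nat, (0 < r')%N ->
         (exists D : {vspace 'rV[F]_n},
            [/\ (D <= C)%VS, \dim D = r' & Supp D = [set: 'I_n]]) ->
         (r <= r')%N)].

Definition monomial_map (s : 'S_n) (a : 'I_n -> F) (x : 'rV[F]_n) : 'rV[F]_n :=
  \row_i (a i * x 0 (s i)).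

Definition mon_equiv (C1 C2 : {vspace 'rV[F]_n}) : Prop :=
  exists (s : 'S_n) (a : 'I_n -> F),
    (forall i, a i != 0) /\
    (forall x : 'rV[F]_n, (x \in C2) = (monomial_map s a x \in C1)).

Definition dual_hamming (k : nat) (D : {vspace 'rV[F]_n}) : Prop :=
  n = ((#|F| ^ k - 1) %/ (#|F| - 1))%N /\
  \dim D = k /\
  exists G : 'M[F]_(k, n),
    [/\ D = (\sum_(i < k) <[row i G]>)%VS,
        (forall j, col j G != 0),
        (forall j1 j2, j1 != j2 -> (<[col j1 G]> != <[col j2 G]>)%VS) &
        (forall v : 'cV[F]_k, v != 0 -> exists j, (<[col j G]> = <[v]>)%VS)].

End Codes.

(* Let G be a generator matrix of C with k = dim C rows.  d(C^perp) >= 3 means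
   that the columns of G are nonzero and pairwise non-proportional, i.e. they are
   distinct points of the projective space PG(k-1, q).  The subcodes of C of
   dimension < k with full support are governed by hyperplanes {u | u v = 0} of
   F^k: such a subcode exists iff some nonzero v is proportional to no column of
   G.  Hence gamma(C) = k iff the columns of G hit every point of PG(k-1, q),
   i.e. G generates a dual Hamming code, whose length is the number
   (q^k - 1)/(q - 1) of those points. *)

From HB Require Import structures.
From mathcomp Require Import all_boot all_order all_algebra all_fingroup all_field.
Set Implicit Arguments. Unset Strict Implicit. Unset Printing Implicit Defensive.
Import GRing.Theory.
Local Open Scope ring_scope.

Section Lines.
Variables (K : fieldType) (vT : vectType K).

Lemma vline_eq (u v : vT) : u \in <[v]>%VS -> u != 0 -> <[u]>%VS = <[v]>%VS.
Proof.
move=> /vlineP[c ->]; rewrite scaler_eq0 negb_or => /andP[c_nz _].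
apply/eqP; rewrite eqEsubv -!memvE memvZ ?memv_line //=.
by rewrite -[v in v \in _](scalerK c_nz) memvZ ?memv_line.
Qed.

Lemma vlineZ (c : K) (v : vT) : c != 0 -> <[c *: v]>%VS = <[v]>%VS.
Proof.
move=> c_nz; have [->|v_nz] := eqVneq v 0; first by rewrite scaler0.
by apply: vline_eq; rewrite ?memvZ ?memv_line // scaler_eq0 negb_or c_nz.
Qed.

End Lines.

Section RowSpace.
Variable K : fieldType.

Definition rowsp (k n : nat) (G : 'M[K]_(k, n)) : {vspace 'rV[K]_n} :=
  (\sum_(i < k) <[row i G]>)%VS.

Lemma memv_rowspP (k n : nat) (G : 'M[K]_(k, n)) (x : 'rV_n) :
  reflect (exists u, x = u *m G) (x \in rowsp G).
Proof.
apply: (iffP idP) => [|[u ->]]; last first.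
  rewrite mulmx_sum_row; apply: memv_suml => i _.
  by rewrite memvZ // memvE (sumv_sup i).
move=> /memv_sumP[y_ y_row ->].
have /all_sig[c y_E] : forall i, {c : K | y_ i = c *: row i G}.
  by move=> i; apply: sig_eqW; apply/vlineP; exact: y_row.
by exists (\row_i c i); rewrite mulmx_sum_row; apply: eq_bigr => i _; rewrite y_E mxE.
Qed.

Lemma rowsp_vbasis (n : nat) (U : {vspace 'rV[K]_n}) :
  rowsp (\matrix_(i < \dim U) tnth (vbasis U) i) = U.
Proof.
rewrite -[RHS](span_basis (vbasisP U)) span_def big_tuple.
by apply: eq_bigr => i _; rewrite rowK.
Qed.

Lemma mulmx_col_entry (k n : nat) (u : 'rV[K]_k) (G : 'M_(k, n)) j :
  (u *m G) 0 j = (u *m col j G) 0 0.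
Proof. by rewrite !mxE; apply: eq_bigr => i _; rewrite mxE. Qed.

Lemma mx11_eq0 (A : 'M[K]_1) : (A == 0) = (A 0 0 == 0).
Proof.
apply/eqP/eqP => [-> | A00]; first by rewrite mxE.
by apply/matrixP => i j; rewrite !ord1 A00 mxE.
Qed.

Lemma ltn_dimv_rV (k : nat) (U : {vspace 'rV[K]_k}) :
  (\dim U < k)%N = ~~ (fullv <= U)%VS.
Proof. by rewrite -(ltn_leqif (dimv_leqif_sup (subvf U))) dimvf /= dim_matrix mul1r. Qed.

Lemma exists_annihilator (k : nat) (U : {vspace 'rV[K]_k}) : (\dim U < k)%N ->
  exists2 v : 'cV_k, v != 0 & forall u, u \in U -> u *m v = 0.
Proof.
move=> ltUk; pose B := \matrix_(l < \dim U) tnth (vbasis U) l.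
have /matrix0Pn[i [j coB_ij]] : cokermx B != 0.
  rewrite -mxrank_eq0 mxrank_coker subn_eq0 -ltnNge.
  exact: leq_ltn_trans (rank_leq_row B) ltUk.
exists (col j (cokermx B)); first by apply/cV0Pn; exists i; rewrite mxE.
have basis0 l : tnth (vbasis U) l *m col j (cokermx B) = 0.
  by rewrite -(rowK (tnth (vbasis U))) -row_mul colE mulmxA mulmx_coker !mul0mx row0.
move=> u /coord_vbasis ->; rewrite mulmx_suml big1 // => l _.
by rewrite -scalemxAl -(tnth_nth 0) basis0 scaler0.
Qed.

Lemma separating_rV (k : nat) (a b : 'cV[K]_k) : b != 0 -> a \notin <[b]>%VS ->
  exists2 u : 'rV_k, u *m b = 0 & u *m a != 0.
Proof.
move=> /cV0Pn[i b_i] a_notin.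
have [l a_l | a_prop] := pickP (fun l => a l 0 * b i 0 - a i 0 * b l 0 != 0).
  exists (b i 0 *: delta_mx 0 l - b l 0 *: delta_mx 0 i);
    rewrite mulmxBl -!scalemxAl -!rowE.
    by apply/matrixP => x y; rewrite !ord1 !mxE mulrC subrr.
  apply: contraNneq a_l => /matrixP/(_ 0 0); rewrite !mxE => e.
  by rewrite [a l 0 * _]mulrC [a i 0 * _]mulrC e.
case/vlineP: a_notin; exists (a i 0 / b i 0).
apply/matrixP => l y; rewrite ord1 !mxE; apply: (mulIf b_i).
by move/negbFE: (a_prop l); rewrite subr_eq0 => /eqP ->; rewrite mulrAC divfK.
Qed.

End RowSpace.

Section Monomial.
Variables (F : finFieldType) (n : nat).

Definition monomial_mx (k : nat) (s : 'S_n) (a : 'I_n -> F) (G : 'M[F]_(k, n)) :=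
  \matrix_(i, j) (a j * G i (s j)).

Lemma monomial_map_mul k s a (G : 'M[F]_(k, n)) (u : 'rV_k) :
  monomial_map s a (u *m G) = u *m monomial_mx s a G.
Proof.
apply/rowP => j; rewrite !mxE big_distrr; apply: eq_bigr => i _.
by rewrite mxE mulrCA.
Qed.

Lemma col_monomial_mx k s a (G : 'M[F]_(k, n)) j :
  col j (monomial_mx s a G) = a j *: col (s j) G.
Proof. by apply/colP => i; rewrite !mxE. Qed.

Lemma mon_equiv_refl (C : {vspace 'rV[F]_n}) : mon_equiv C C.
Proof.
exists 1%g, (fun=> 1); split=> [i|x]; first exact: oner_neq0.
by congr (_ \in C); apply/rowP => i; rewrite mxE perm1 mul1r.
Qed.

Lemma mon_equiv_rowsp k (C : {vspace 'rV[F]_n}) (G : 'M[F]_(k, n)) s a :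
  (forall i, a i != 0) ->
  (forall x, (x \in rowsp G) = (monomial_map s a x \in C)) ->
  C = rowsp (monomial_mx s a G).
Proof.
move=> a_nz memC; apply/vspaceP => x; apply/idP/memv_rowspP => [xC | [u ->]].
  pose y := \row_j (x 0 (s^-1%g j) / a (s^-1%g j)).
  have my : monomial_map s a y = x.
    by apply/rowP => i; rewrite !mxE permK mulrC divfK.
  have /memv_rowspP[u yE] : y \in rowsp G by rewrite memC my.
  by exists u; rewrite -monomial_map_mul -yE.
by rewrite -monomial_map_mul -memC; apply/memv_rowspP; exists u.
Qed.

End Monomial.

Section Codes.
Variables (F : finFieldType) (n : nat).
Implicit Types (C D : {vspace 'rV[F]_n}).

Lemma dual_min_dist_leq C d : dual_min_dist C d -> (d <= n)%N.
Proof. by case=> [[x [_ _ <-]] _]; rewrite /wt -[n in (_ <= n)%N]card_ord max_card. Qed.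

Lemma Supp_rowsp k (G : 'M[F]_(k, n)) j : (j \in Supp (rowsp G)) = (col j G != 0).
Proof.
rewrite inE; apply/existsP/idP => [[x /andP[/memv_rowspP[u ->] uG_j]] | ].
  by apply: contraNneq uG_j => G_j0; rewrite mulmx_col_entry G_j0 mulmx0 mxE.
case/cV0Pn => i; rewrite mxE => G_ij; exists (row i G).
by rewrite mxE G_ij andbT rowE; apply/memv_rowspP; exists (delta_mx 0 i).
Qed.

Lemma Supp_full_dim_gt0 D : (0 < n)%N -> Supp D = [set: 'I_n] -> (0 < \dim D)%N.
Proof.
move=> n_gt0 SD; have : Ordinal n_gt0 \in Supp D by rewrite SD inE.
rewrite inE => /existsP[x /andP[xD x_nz]].
have x_neq0 : x != 0 by apply: contraNneq x_nz => ->; rewrite mxE.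
have /dimvS : (<[x]> <= D)%VS by rewrite -memvE.
by rewrite dim_vline x_neq0.
Qed.

Lemma col_vline_neq k (G : 'M[F]_(k, n)) :
  (forall x, in_dual (rowsp G) x -> x != 0 -> (3 <= wt x)%N) ->
  forall j1 j2, j1 != j2 -> (<[col j1 G]> != <[col j2 G]>)%VS.
Proof.
move=> dual_ge3 j1 j2 j12; apply/negP => /eqP e.
have /vlineP[c Gj1] : col j1 G \in <[col j2 G]>%VS by rewrite -e memv_line.
pose w : 'rV[F]_n := delta_mx 0 j1 - c *: delta_mx 0 j2.
have w_dual : in_dual (rowsp G) w.
  move=> _ /memv_rowspP[u ->].
  move: (u *m G) (mulmx_col_entry u G j1) (mulmx_col_entry u G j2) => y y_j1 y_j2.
  apply/matrixP => ? ?; rewrite !ord1 mulmxBl -scalemxAl -!rowE !mxE.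
  by rewrite y_j1 y_j2 Gj1 -scalemxAr mxE subrr.
have w_nz : w != 0.
  by apply/rV0Pn; exists j1; rewrite !mxE !eqxx (negbTE j12) mulr0 subr0 oner_eq0.
have supp_w : supp w \subset [set j1; j2].
  apply/subsetP => i; rewrite !inE !mxE.
  apply: contraR; rewrite negb_or => /andP[/negbTE-> /negbTE->].
  by rewrite mulr0 subr0.
have := leq_trans (dual_ge3 w w_dual w_nz) (subset_leq_card supp_w).
by rewrite cards2 j12.
Qed.

(* If no column of G lies on the line of v, the subcode {uG | u v = 0} has full
   support and dimension < k. *)
Lemma col_vline_cover k (G : 'M[F]_(k, n)) :
  (0 < n)%N -> covering_dim (rowsp G) k ->
  forall v : 'cV_k, v != 0 -> exists j, (<[col j G]> = <[v]>)%VS.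
Proof.
move=> n_gt0 [SG _ _ minG] v v_nz.
have [j /eqP | no_col] := pickP (fun j => <[col j G]>%VS == <[v]>%VS); first by exists j.
have col_notin j : col j G \notin <[v]>%VS.
  by apply: contraFN (no_col j) => /vline_eq->; rewrite // -Supp_rowsp SG inE.
pose U := lker (linfun (mulmxr v) : 'Hom('rV_k, 'M_1)).
pose D := (linfun (mulmxr G) @: U)%VS.
have memU u : (u \in U) = (u *m v == 0) by rewrite memv_ker lfunE.
have DG : (D <= rowsp G)%VS.
  by apply/subvP => _ /memv_imgP[u _ ->]; rewrite lfunE; apply/memv_rowspP; exists u.
have SD : Supp D = [set: 'I_n].
  apply/setP => j; rewrite !inE; have [u uv uG] := separating_rV v_nz (col_notin j).
  apply/existsP; exists (u *m G); rewrite mulmx_col_entry -mx11_eq0 uG andbT.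
  have uU : u \in U by rewrite memU uv.
  by have := memv_img (linfun (mulmxr G)) uU; rewrite lfunE.
have ltUk : (\dim U < k)%N.
  rewrite ltn_dimv_rV; have [i v_i] := cV0Pn _ v_nz; apply/negP => /subvP/(_ (delta_mx 0 i) (memvf _)).
  by rewrite memU -rowE mx11_eq0 mxE (negbTE v_i).
have leDU : (\dim D <= \dim U)%N.
  by rewrite -(limg_ker_dim (linfun (mulmxr G)) U) leq_addl.
have := minG _ (Supp_full_dim_gt0 n_gt0 SD) (ex_intro _ D (And3 DG erefl SD)).
by rewrite leqNgt (leq_ltn_trans leDU ltUk).
Qed.

(* A subcode D of smaller dimension is contained in a subcode {uG | u v = 0} with
   v != 0, so D vanishes at every coordinate j with col j G on the line of v. *)
Lemma covering_dim_rowsp k (G : 'M[F]_(k, n)) : (0 < n)%N ->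
  (forall j, col j G != 0) ->
  (forall v : 'cV_k, v != 0 -> exists j, (<[col j G]> = <[v]>)%VS) ->
  covering_dim (rowsp G) (\dim (rowsp G)).
Proof.
move=> n_gt0 col_nz cover; set C := rowsp G.
have SC : Supp C = [set: 'I_n] by apply/setP => j; rewrite Supp_rowsp col_nz inE.
split=> //; [exact: Supp_full_dim_gt0 | by exists C; rewrite subvv | ].
move=> _ _ [D [DC <- SD]]; rewrite leqNgt; apply/negP => ltDC.
pose U := (linfun (mulmxr G) @^-1: D)%VS.
have memU u : (u \in U) = (u *m G \in D) by rewrite -memv_preim lfunE.
have /exists_annihilator[v v_nz Uv] : (\dim U < k)%N.
  rewrite ltn_dimv_rV; apply: contraTN ltDC => /subvP fullU; rewrite -leqNgt dimvS //.
  by apply/subvP => _ /memv_rowspP[u ->]; rewrite -memU fullU ?memvf.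
have [j Gj] := cover v v_nz.
have /vlineP[c Gj_v] : col j G \in <[v]>%VS by rewrite -Gj memv_line.
have : j \in Supp D by rewrite SD inE.
rewrite inE => /existsP[x /andP[xD]]; have /memv_rowspP[u xE] := subvP DC x xD.
by rewrite xE mulmx_col_entry Gj_v -scalemxAr Uv ?scaler0 ?mxE ?eqxx // memU -xE.
Qed.

(* (j, c) |-> c *: col j G is a bijection from 'I_n * F^* onto the nonzero
   vectors of F^k. *)
Lemma ncols_simplex k (G : 'M[F]_(k, n)) :
  (forall j, col j G != 0) ->
  (forall j1 j2, j1 != j2 -> (<[col j1 G]> != <[col j2 G]>)%VS) ->
  (forall v : 'cV_k, v != 0 -> exists j, (<[col j G]> = <[v]>)%VS) ->
  n = ((#|F| ^ k - 1) %/ (#|F| - 1))%N.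
Proof.
move=> col_nz col_neq cover.
pose A := setX [set: 'I_n] [set c : F | c != 0].
pose f (p : 'I_n * F) := p.2 *: col p.1 G.
have f_inj : {in A &, injective f}.
  move=> [j1 c1] [j2 c2]; rewrite !inE /f /= => c1_nz c2_nz e.
  have j12 : j1 = j2.
    have [// | /col_neq] := eqVneq j1 j2.
    by rewrite -(vlineZ _ c1_nz) e vlineZ ?eqxx.
  subst j2; congr (_, _); apply/eqP; rewrite -subr_eq0.
  have : (c1 - c2) *: col j1 G == 0 by rewrite scalerBl e subrr.
  by rewrite scaler_eq0 (negbTE (col_nz j1)) orbF.
have imA : [set f p | p in A] = [set~ 0].
  apply/setP => v; rewrite !inE; apply/imsetP/idP => [[[j c]] | v_nz].
    by rewrite !inE /f /= => c_nz ->; rewrite scaler_eq0 negb_or c_nz col_nz.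
  have [j Gj] := cover v v_nz.
  have /vlineP[c v_c] : v \in <[col j G]>%VS by rewrite Gj memv_line.
  exists (j, c) => //; rewrite !inE /=; apply: contraNneq v_nz => c0.
  by rewrite v_c c0 scale0r.
have := card_in_imset f_inj; rewrite imA cardsC1 cardsX cardsT card_ord card_mx muln1.
have -> : #|[set c : F | c != 0]| = (#|F|).-1.
  by rewrite -(cardsC1 (0 : F)); apply: eq_card => c; rewrite !inE.
rewrite -!subn1 => ->.
by rewrite mulnK // subn_gt0 card_finNzRing_gt1.
Qed.

End Codes.

Theorem mainTheorem4 (F : finFieldType) (n : nat) (C : {vspace 'rV[F]_n}) :
  dual_min_dist C 3 ->
  (covering_dim C (\dim C) <->
   exists (k' : nat) (D : {vspace 'rV[F]_n}), dual_hamming k' D /\ mon_equiv C D).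
Proof.
move=> dC3; have n_gt0 : (0 < n)%N by apply: leq_trans _ (dual_min_dist_leq dC3).
split=> [covC | [k [D [[_ [_ [G [-> G_nz _ G_cover]]]] [s [a [a_nz memC]]]]]]].
  pose G := \matrix_(i < \dim C) tnth (vbasis C) i.
  have CG : C = rowsp G by rewrite rowsp_vbasis.
  have [_ dG_ge3] : dual_min_dist (rowsp G) 3 by rewrite -CG.
  have covG : covering_dim (rowsp G) (\dim C) by rewrite -CG.
  have G_nz j : col j G != 0 by case: covG => SG _ _ _; rewrite -Supp_rowsp SG inE.
  have G_neq := col_vline_neq dG_ge3.
  have G_cover := col_vline_cover n_gt0 covG.
  exists (\dim C), C; split; last exact: mon_equiv_refl.
  split; first exact: ncols_simplex G_nz G_neq G_cover.
  by split=> //; exists G.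
rewrite (mon_equiv_rowsp a_nz memC); apply: covering_dim_rowsp => // [j | v /G_cover[j Gj]].
  by rewrite col_monomial_mx scaler_eq0 negb_or a_nz G_nz.
by exists (s^-1%g j); rewrite col_monomial_mx vlineZ // permKV.
Qed.
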